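(* Let $F\in\mathbb{R}^{n\times n}$, $G\in\mathbb{R}^{n\times m}$ and $H\in\mathbb{R}^{p\times n}$ with $m\le p$ and $m\le n$, such that $(F,G)$ is reachable, $(F,H)$ is observable, $F$ has all its eigenvalues in the open left half-plane, $G$ has full column rank $m$, and $\mathrm{rank}(HG)=m$. Let $V_{\zeta}(s)=H(sI-F)^{-1}G$. Let $\Pi$ be a $p\times p$ permutation matrix such that $\Pi H=\begin{pmatrix}H_0\\ H_1\end{pmatrix}$ with $H_0\in\mathbb{R}^{m\times n}$ and $H_0G$ invertible (such a $\Pi$ exists because $\mathrm{rank}(HG)=m$). Define $\Gamma=F-G(H_0G)^{-1}H_0F$, $$T(s)=H_1\Gamma(sI-\Gamma)^{-1}G(H_0G)^{-1}+H_1G(H_0G)^{-1},\qquad M(s)=H_0F(sI-F)^{-1}G+H_0G .$$ Then $$\Pi\, V_{\zeta}(s)=\begin{pmatrix} I\\ T(s)\end{pmatrix}M(s)\,s^{-1}.$$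
   Context: Here $V_\zeta$ is a minimal stable spectral factor of the spectral density $\Phi_\zeta(i\omega)=V_\zeta(i\omega)V_\zeta(-i\omega)'$ of a stationary $p$-vector process $\zeta$; reordering the rows of $H$ by $\Pi$ corresponds to reordering the entries of $\zeta$ so that the first $m$ entries form $u$ and the remaining $p-m$ form $y$, and $T$ is then the transfer function relating $u$ to $y$. *)

From HB Require Import structures.
From mathcomp Require Import all_boot all_order all_algebra all_fingroup.
From mathcomp Require Import complex.
Set Implicit Arguments. Unset Strict Implicit. Unset Printing Implicit Defensive.
Import Order.TTheory GRing.Theory Num.Theory.
Local Open Scope ring_scope.

Definition cmx (R : rcfType) (k l : nat) (A : 'M[R]_(k, l)) : 'M[R[i]]_(k, l) :=
  map_mx (fun x : R => (x%:C)%C) A.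

Definition reachable (R : fieldType) (n m : nat) (F : 'M[R]_n) (G : 'M[R]_(n, m)) :=
  \rank (\mxrow_(k < n) (F ^+ k *m G)) = n.

Definition observable (R : fieldType) (n p : nat) (F : 'M[R]_n) (H : 'M[R]_(p, n)) :=
  \rank (\mxcol_(k < n) (H *m F ^+ k)) = n.

Definition hurwitz (R : rcfType) (n : nat) (F : 'M[R]_n) :=
  forall lam : R[i], eigenvalue (cmx F) lam -> Re lam < 0.

From HB Require Import structures.
From mathcomp Require Import all_boot all_order all_algebra all_fingroup.
From mathcomp Require Import complex.
Set Implicit Arguments. Unset Strict Implicit. Unset Printing Implicit Defensive.
Import Order.TTheory GRing.Theory Num.Theory.
Local Open Scope ring_scope.

(* With R_F(s) = (sI - F)^-1 one has F R_F(s) = s R_F(s) - I, so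
   H0 F R_F(s) G + H0 G = s H0 R_F(s) G, and likewise T(s) = s H1 R_Gam(s) G K
   with K = (H0 G)^-1.  Since Gam = F - G K H0 F is F with the output H0 fed
   back, (sI - Gam) R_F(s) G = s G K H0 R_F(s) G, i.e.
   R_F(s) G = s R_Gam(s) G K H0 R_F(s) G.  Stacking the rows H0 and H1 of
   Pi H gives the factorisation, which is proved over an arbitrary field and
   then transported to R[i]. *)

Section Resolvent.

Variables (C : comUnitRingType) (n : nat) (f : 'M[C]_n) (s : C).
Hypothesis unit_resolvent : s%:M - f \in unitmx.

Lemma mulmx_resolvent : f *m invmx (s%:M - f) = s *: invmx (s%:M - f) - 1%:M.
Proof.
have := mulmxV unit_resolvent; set Rf := invmx _.
rewrite mulmxBl mul_scalar_mx => <-.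
by rewrite opprB addrC subrK.
Qed.

Lemma resolvent_feedthroughE k l (h : 'M[C]_(k, n)) (g : 'M[C]_(n, l)) :
  h *m f *m invmx (s%:M - f) *m g + h *m g = s *: (h *m invmx (s%:M - f) *m g).
Proof.
rewrite -(mulmxA h f) mulmx_resolvent mulmxBr mulmxBl mulmx1.
by rewrite -scalemxAr -scalemxAl subrK.
Qed.

End Resolvent.

Lemma resolvent_feedbackE (C : comUnitRingType) n m (f : 'M[C]_n)
    (g : 'M[C]_(n, m)) (l : 'M[C]_(m, n)) (s : C) :
  let gam := f - g *m l *m f in
  l *m g = 1%:M -> s%:M - f \in unitmx -> s%:M - gam \in unitmx ->
  s *: (invmx (s%:M - gam) *m g *m l *m invmx (s%:M - f) *m g) =
  invmx (s%:M - f) *m g.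
Proof.
move=> gam lg1 uF uGam; set Rf := invmx (s%:M - f).
have closed_loop : (s%:M - gam) *m (Rf *m g) = s *: (g *m l *m Rf *m g).
  have -> : s%:M - gam = (s%:M - f) + g *m l *m f by rewrite opprB addrCA addrC.
  rewrite mulmxDl mulmxA mulmxV // mul1mx -!mulmxA (mulmxA f) mulmx_resolvent //.
  rewrite -/Rf mulmxBl mul1mx !mulmxBr lg1 mulmx1 addrCA subrr addr0.
  by rewrite -scalemxAl -!scalemxAr !mulmxA.
rewrite -[RHS]mul1mx -(mulVmx uGam) -[RHS]mulmxA closed_loop -scalemxAr.
by rewrite !mulmxA.
Qed.

Lemma transfer_factorization (C : fieldType) n m q (f : 'M[C]_n)
    (g : 'M[C]_(n, m)) (h0 : 'M[C]_(m, n)) (h1 : 'M[C]_(q, n)) (s : C) :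
  let K := invmx (h0 *m g) in
  let gam := f - g *m K *m h0 *m f in
  h0 *m g \in unitmx -> s != 0 -> s%:M - f \in unitmx -> s%:M - gam \in unitmx ->
  col_mx h0 h1 *m invmx (s%:M - f) *m g =
  s^-1 *: (col_mx 1%:M (h1 *m gam *m invmx (s%:M - gam) *m g *m K + h1 *m g *m K)
     *m (h0 *m f *m invmx (s%:M - f) *m g + h0 *m g)).
Proof.
move=> K gam uH0G sn0 uF uGam.
have KH0G : K *m h0 *m g = 1%:M by rewrite -mulmxA mulVmx.
have gamE : gam = f - g *m (K *m h0) *m f by rewrite !mulmxA.
have T_E : h1 *m gam *m invmx (s%:M - gam) *m g *m K + h1 *m g *m K
    = s *: (h1 *m invmx (s%:M - gam) *m (g *m K)).
  by rewrite -!(mulmxA _ g K) resolvent_feedthroughE.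
rewrite T_E resolvent_feedthroughE // !mul_col_mx mul1mx scale_col_mx.
rewrite -scalemxAl -!scalemxAr !scalerA mulVf // scale1r; congr col_mx.
rewrite mul1r -(mulmxA h1) -(resolvent_feedbackE KH0G) -?gamE //.
by rewrite -scalemxAr !mulmxA.
Qed.

Section ComplexEmbedding.

Variable R : rcfType.

Lemma cmxM k l p (A : 'M[R]_(k, l)) (B : 'M[R]_(l, p)) :
  cmx (A *m B) = cmx A *m cmx B.
Proof. exact: map_mxM. Qed.

Lemma cmxB k l (A B : 'M[R]_(k, l)) : cmx (A - B) = cmx A - cmx B.
Proof. exact: map_mxB. Qed.

Lemma cmx_col_mx k l p (A : 'M[R]_(k, p)) (B : 'M[R]_(l, p)) :
  cmx (col_mx A B) = col_mx (cmx A) (cmx B).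
Proof. exact: map_col_mx. Qed.

Lemma cmx_invmx k (A : 'M[R]_k) : cmx (invmx A) = invmx (cmx A).
Proof. exact: map_invmx. Qed.

Lemma cmx_unitmx k (A : 'M[R]_k) : (cmx A \in unitmx) = (A \in unitmx).
Proof. exact: map_unitmx. Qed.

Lemma cmx_perm_mx k (P : 'S_k) : cmx (perm_mx P : 'M[R]_k) = perm_mx P.
Proof. exact: map_perm_mx. Qed.

End ComplexEmbedding.

Theorem theorem1 (R : rcfType) (n m q : nat)
  (F : 'M[R]_n) (G : 'M[R]_(n, m)) (H : 'M[R]_(m + q, n))
  (Pi : 'S_(m + q)) (s : R[i]) :
  (m <= n)%N ->
  reachable F G ->
  observable F H ->
  hurwitz F ->
  \rank G = m ->
  \rank (H *m G) = m ->
  let H0 := usubmx (perm_mx Pi *m H) in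
  let H1 := dsubmx (perm_mx Pi *m H) in
  H0 *m G \in unitmx ->
  let Gam := F - G *m invmx (H0 *m G) *m H0 *m F in
  let V := cmx H *m invmx (s%:M - cmx F) *m cmx G in
  let T := cmx H1 *m cmx Gam *m invmx (s%:M - cmx Gam) *m cmx G *m cmx (invmx (H0 *m G))
           + cmx H1 *m cmx G *m cmx (invmx (H0 *m G)) in
  let M := cmx H0 *m cmx F *m invmx (s%:M - cmx F) *m cmx G + cmx H0 *m cmx G in
  s != 0 ->
  s%:M - cmx F \in unitmx ->
  s%:M - cmx Gam \in unitmx ->
  perm_mx Pi *m V = s^-1 *: (col_mx 1%:M T *m M).
Proof.
(* The identity is algebraic: the system-theoretic hypotheses are only needed
   for V to be a minimal stable spectral factor. *)
move=> _ _ _ _ _ _ H0 H1 uH0G Gam V T M sn0 uF uGam.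
have cmx_Gam :
    cmx Gam = cmx F - cmx G *m invmx (cmx H0 *m cmx G) *m cmx H0 *m cmx F.
  by rewrite cmxB !cmxM cmx_invmx cmxM.
have cmx_PiH : perm_mx Pi *m cmx H = col_mx (cmx H0) (cmx H1).
  by rewrite -cmx_perm_mx -cmxM -cmx_col_mx vsubmxK.
have uH0Gc : cmx H0 *m cmx G \in unitmx by rewrite -cmxM cmx_unitmx.
rewrite /V [LHS]mulmxA [in LHS]mulmxA cmx_PiH.
move: uGam; rewrite cmx_Gam => uGam.
have := transfer_factorization (cmx H1) uH0Gc sn0 uF uGam.
rewrite /T /M cmx_invmx cmxM -cmx_Gam; exact.
Qed.
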